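(* Let $(E,j)$ be a soft inductive system of Banach spaces over a directed set $N$. A uniformly bounded net $x_\bullet=(x_n)_{n\in N}$, $x_n\in E_n$, is $j$-convergent if and only if $$\lim_{n\gg m}\|x_n-j_{nm}x_m\|=0 ,$$ equivalently $\lim_m |x_\bullet - j_{\bullet m}x_m| = 0$. Moreover, if $x_\bullet$ is $j$-convergent, then the limit $\lim_n\|x_n\|$ (along $N$) exists and hence equals $|x_\bullet|$.
   Context: Let $(N,\le)$ be a directed set. For reals $a_{nm}$ ($n,m\in N$) write $\lim_{n\gg m}a_{nm}:=\lim_m\limsup_n a_{nm}$, all limits taken along $N$. A soft inductive system of Banach spaces $(E,j)$ over $N$ consists of Banach spaces $E_n$ ($n\in N$) and linear contractions $j_{nm}:E_m\to E_n$ for $n\ge m$, with $j_{nn}=\mathrm{id}$ and the convention $j_{nm}=0$ if $n\not\ge m$, such that $\lim_{n\gg m}\|(j_{nl}-j_{nm}j_{ml})x_l\|=0$ for all $l\in N$, $x_l\in E_l$. It is strict if $j_{nl}=j_{nm}j_{ml}$ whenever $n\ge m\ge l$. A net is a family $x_\bullet=(x_n)_{n\in N}$ with $x_n\in E_n$; $\Pi(E,j)$ denotes the Banach space of uniformly bounded nets with norm $\|x_\bullet\|_\Pi=\sup_n\|x_n\|$, and it carries the seminorm $|x_\bullet|:=\limsup_n\|x_n\|$. A basic net is a net of the form $j_{\bullet m}x_m:=(j_{nm}x_m)_{n\in N}$ for some $m\in N$, $x_m\in E_m$. A net is $j$-convergent if it lies in the closure, with respect to the seminorm $|\cdot|$,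 of the set of basic nets in $\Pi(E,j)$. *)

From HB Require Import structures.
From mathcomp Require Import all_boot all_order all_algebra.
From mathcomp Require Import all_classical all_reals all_analysis.
Import Order.TTheory GRing.Theory Num.Theory.
Import numFieldNormedType.Exports.
Set Implicit Arguments. Unset Strict Implicit. Unset Printing Implicit Defensive.
Local Open Scope classical_set_scope.
Local Open Scope ring_scope.

Definition directed_set (N : Type) (le : N -> N -> Prop) : Prop :=
  [/\ inhabited N, (forall n, le n n),
      (forall a b c, le a b -> le b c -> le a c) &
      (forall a b, exists c, le a c /\ le b c)].

Definition dir_filter (N : Type) (le : N -> N -> Prop) : set_system N :=
  filter_from setT (fun m => [set n | le m n]).

(* limsup_n a_n along N, valued in the extended reals
   (same formula as the library's limf_esup, which requires a filteredType). *)
Definition net_limsup (R : realType) (N : Type) (le : N -> N -> Prop)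
  (a : N -> R) : \bar R :=
  ereal_inf [set ereal_sup ((fun n => (a n)%:E) @` V) | V in dir_filter le].

(* lim_{n >> m} a_{nm} = 0, i.e. lim_m limsup_n a_{nm} = 0. *)
Definition lim_gg_zero (R : realType) (N : Type) (le : N -> N -> Prop)
  (a : N -> N -> R) : Prop :=
  (fun m => net_limsup le (fun n => a n m)) @ dir_filter le --> (0 : \bar R)%E.

Definition soft_inductive_system (R : realType) (N : Type)
  (le : N -> N -> Prop) (E : N -> completeNormedModType R)
  (j : forall n m : N, {linear E m -> E n}) : Prop :=
  [/\ directed_set le,
      (forall n m (x : E m), `|j n m x| <= `|x|),
      (forall n (x : E n), j n n x = x),
      (forall n m (x : E m), ~ le m n -> j n m x = 0) &
      (forall l (x : E l),
         lim_gg_zero le (fun n m => `|j n l x - j n m (j m l x)|))].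

Definition unif_bounded (R : realType) (N : Type) (E : N -> completeNormedModType R)
  (x : forall n, E n) : Prop :=
  exists C : R, forall n, `|x n| <= C.

Definition net_seminorm (R : realType) (N : Type) (le : N -> N -> Prop)
  (E : N -> completeNormedModType R) (x : forall n, E n) : \bar R :=
  net_limsup le (fun n => `|x n|).

Definition basic_net (R : realType) (N : Type) (E : N -> completeNormedModType R)
  (j : forall n m : N, {linear E m -> E n}) (m : N) (xm : E m) : forall n, E n :=
  fun n => j n m xm.

(* x_. is j-convergent: it lies in the |.|-closure of the set of basic nets. *)
Definition j_convergent (R : realType) (N : Type) (le : N -> N -> Prop)
  (E : N -> completeNormedModType R) (j : forall n m : N, {linear E m -> E n})
  (x : forall n, E n) : Prop :=
  forall eps : R, 0 < eps ->
    exists (m : N) (xm : E m),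
      (net_seminorm le (fun n => (x n - basic_net j xm n)%R) < eps%:E)%E.

From HB Require Import structures.
From mathcomp Require Import all_boot all_order all_algebra.
From mathcomp Require Import all_classical all_reals all_analysis.
From mathcomp Require Import lra.
Import Order.TTheory GRing.Theory Num.Theory.
Import numFieldNormedType.Exports.
Local Open Scope classical_set_scope.
Local Open Scope ring_scope.

(* The argument is elementary: every statement is reduced to "eventual"
   bounds along the directed set N.
   - First, the section filter of a directed set is a proper filter, and the
     net limsup is controlled by eventual bounds: limsup a < e gives a tail on
     which a < e, a tail bound a <= e gives limsup a <= e, and a bounded
     nonnegative net has a finite nonnegative limsup.
   - Convergence of a nonnegative extended-real net to 0 is rephrased as
     "for every eps > 0, eventually g < eps".
   - j-convergence implies lim_{n>>m} ||x_n - j_nm x_m|| = 0 by a three-term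
     triangle inequality through an approximating basic net j_{.l} y, the
     middle term being controlled by softness of (E, j); the converse takes
     the basic net j_{.m} x_m itself as approximation.
   - The second equivalence is definitional (basic_net unfolds), and the
     convergence of ||x_n|| follows from the two-sided estimate
     | limsup_n ||x_n|| - ||x_m|| | <= |x_. - j_{.m} x_m| for large m. *)

Section DirectedSet.
Context {N : Type} {le : N -> N -> Prop}.
Hypothesis hdir : directed_set le.

Lemma dir_filter_proper : ProperFilter (dir_filter le).
Proof.
case: hdir => [[n0] refl trans dir].
apply: filter_from_proper; last by move=> i _; exists i; exact: refl.
apply: filter_from_filter; first by exists n0.
move=> i k _ _; have [c [ic kc]] := dir i k.
exists c => // n /= cn; split; [exact: trans ic cn | exact: trans kc cn].
Qed.

Lemma dir_cvg0_intro {R : realType} (g : N -> \bar R) :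
  (forall eps : R, 0 < eps ->
     exists m0, forall m, le m0 m -> (0%:E <= g m)%E /\ (g m < eps%:E)%E) ->
  g @ dir_filter le --> (0 : \bar R)%E.
Proof.
move=> H; have FF := dir_filter_proper.
apply/fine_cvgP; split.
  have [m0 Hm] := H 1 ltr01; exists m0 => // m /Hm [g0 g1].
  by rewrite ge0_fin_numE // (lt_trans g1) // ltey.
apply/cvgrPdist_lt => e e0; have [m0 Hm] := H e e0; exists m0 => // m /Hm [].
rewrite /comp /=; case: (g m) => // r; rewrite lee_fin lte_fin /= => r0 re.
by rewrite sub0r normrN ger0_norm.
Qed.

Lemma dir_cvg0_elim {R : realType} {g : N -> \bar R} :
  g @ dir_filter le --> (0 : \bar R)%E ->
  forall eps : R, 0 < eps -> exists m0, forall m, le m0 m -> (g m < eps%:E)%E.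
Proof.
have FF := dir_filter_proper; move/fine_cvgP => [fin cv] e e0.
move/cvgrPdist_lt: cv => /(_ e e0) [m2 _ H2]; case: fin => m1 _ H1.
have [_ _ trans dir] := hdir; have [m0 [h1 h2]] := dir m1 m2.
exists m0 => m m0m.
have fm : g m \is a fin_num by apply: H1; exact: trans h1 m0m.
have := H2 m (trans _ _ _ h2 m0m); rewrite /= sub0r normrN => hm.
by rewrite -(fineK fm) lte_fin (le_lt_trans (ler_norm _) hm).
Qed.

End DirectedSet.

Section NetLimsup.
Context {R : realType} {N : Type} {le : N -> N -> Prop}.

Lemma net_limsup_lt {a : N -> R} {e : R} :
  (net_limsup le a < e%:E)%E -> exists m, forall n, le m n -> a n < e.
Proof.
move/ereal_inf_lt => [y [V [m _ Vm] <-] ysup].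
exists m => n mn; rewrite -lte_fin; apply: le_lt_trans ysup.
apply: ereal_sup_ubound; exists n => //; exact: Vm.
Qed.

Lemma net_limsup_le (a : N -> R) (e : R) (m : N) :
  (forall n, le m n -> a n <= e) -> (net_limsup le a <= e%:E)%E.
Proof.
move=> H.
apply: (@le_trans _ _ (ereal_sup ((fun n => (a n)%:E) @` [set n | le m n]))).
  by apply: ereal_inf_lbound; exists [set n | le m n] => //; exists m.
by apply: ge_ereal_sup => _ [n mn <-]; rewrite lee_fin; apply: H.
Qed.

Lemma net_limsup_ge (a : N -> R) (e : R) :
  directed_set le -> (forall n, e <= a n) -> (e%:E <= net_limsup le a)%E.
Proof.
case=> [_ refl _ _] H.
apply/ereal_infP => _ [V [m _ Vm] <-].
apply: (@le_trans _ _ (a m)%:E); first by rewrite lee_fin.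
by apply: ereal_sup_ubound; exists m => //; apply: Vm; exact: refl.
Qed.

Lemma net_limsup_fin (a : N -> R) (C : R) :
  directed_set le -> (forall n, 0 <= a n <= C) ->
  exists s : R, net_limsup le a = s%:E /\ 0 <= s.
Proof.
move=> hd H.
have h0 : (0%:E <= net_limsup le a)%E.
  by apply: net_limsup_ge => // n; case/andP: (H n).
have [[n0] _ _ _] := hd.
have hC : (net_limsup le a <= C%:E)%E.
  by apply: (@net_limsup_le _ _ n0) => n _; case/andP: (H n).
by move: h0 hC; case: (net_limsup le a) => // r; rewrite !lee_fin => r0 _; exists r.
Qed.

End NetLimsup.

Section SoftSystem.
Variables (R : realType) (N : Type) (le : N -> N -> Prop).
Variables (E : N -> completeNormedModType R) (j : forall n m : N, {linear E m -> E n}).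
Hypothesis hsoft : soft_inductive_system le j.

(* ||x_n - j_nm x_m|| is bounded through any basic net j_{.l} y:
   distance to the basic net at n, the softness defect at (n, m),
   and (by contractivity of j_nm) the distance to the basic net at m. *)
Lemma dist_basic_triangle (x : forall n, E n) (l m n : N) (y : E l) :
  `|x n - j n m (x m)| <=
    `|x n - j n l y| + `|j n l y - j n m (j m l y)| + `|x m - j m l y|.
Proof.
have [_ contr _ _ _] := hsoft.
have -> : x n - j n m (x m) = (x n - j n l y) + (j n l y - j n m (j m l y))
                              + j n m (j m l y - x m).
  by rewrite linearB /= !addrA !subrK.
apply: (le_trans (ler_normD _ _)); apply: lerD; first exact: ler_normD.
by apply: (le_trans (contr _ _ _)); rewrite distrC.
Qed.

Lemma j_convergent_lim_gg (x : forall n, E n) :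
  j_convergent le j x -> lim_gg_zero le (fun n m => `|x n - j n m (x m)|).
Proof.
have [hd _ _ _ soft] := hsoft; have [_ _ trans dir] := hd.
move=> hc; apply: dir_cvg0_intro => // eps e0.
pose d := eps / 4; have d0 : 0 < d by rewrite /d divr_gt0.
have [l [y /net_limsup_lt [m1 H1]]] := hc d d0.
have [m2 H2] := dir_cvg0_elim hd (soft l y) _ d0.
have [m0 [h1 h2]] := dir m1 m2.
exists m0 => m m0m; split; first by apply: net_limsup_ge.
have [m3 H3] := net_limsup_lt (H2 m (trans _ _ _ h2 m0m)).
have [m4 [h41 h43]] := dir m1 m3.
apply: (@le_lt_trans _ _ (d + d + d)%:E); last by rewrite lte_fin /d; lra.
apply: (@net_limsup_le _ _ _ _ _ m4) => n m4n.
apply: (le_trans (dist_basic_triangle x l m n y)).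
have := H1 n (trans _ _ _ h41 m4n); have := H3 n (trans _ _ _ h43 m4n).
have := H1 m (trans _ _ _ h1 m0m); rewrite /basic_net; lra.
Qed.

Lemma lim_gg_j_convergent (x : forall n, E n) :
  lim_gg_zero le (fun n m => `|x n - j n m (x m)|) -> j_convergent le j x.
Proof.
have [hd _ _ _ _] := hsoft; have [_ refl _ _] := hd.
move=> hl eps e0; have [m0 Hm] := dir_cvg0_elim hd hl _ e0.
by exists m0, (x m0); exact: Hm m0 (refl m0).
Qed.

Lemma j_convergent_norm_cvg (x : forall n, E n) :
  unif_bounded x -> j_convergent le j x ->
  exists l : R, ((fun n => `|x n|) @ dir_filter le --> l) /\
                net_seminorm le x = l%:E.
Proof.
have [hd contr _ _ _] := hsoft; have [_ _ trans dir] := hd.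
have FF := dir_filter_proper hd.
move=> [C HC] /j_convergent_lim_gg hl.
have [s [hs s0]] := @net_limsup_fin _ _ le (fun n => `|x n|) C hd
  (fun n => ltac:(by rewrite normr_ge0 HC)).
exists s; split=> //; apply/cvgrPdist_lt => e e0.
have [m1 H1] : exists m, forall n, le m n -> `|x n| < s + e.
  by apply: net_limsup_lt; rewrite hs lte_fin; lra.
have e20 : 0 < e / 2 by rewrite divr_gt0.
have [m2 H2] := dir_cvg0_elim hd hl _ e20.
have [m0 [h1 h2]] := dir m1 m2.
exists m0 => // m m0m /=.
have lower : s <= `|x m| + e / 2.
  have [m3 H3] := net_limsup_lt (H2 m (trans _ _ _ h2 m0m)).
  rewrite -lee_fin -hs; apply: (@net_limsup_le _ _ _ _ _ m3) => n m3n.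
  have : `|x n| <= `|x n - j n m (x m)| + `|j n m (x m)|.
    by rewrite -{1}(subrK (j n m (x m)) (x n)) ler_normD.
  have := H3 n m3n; have := contr n m (x m); lra.
have upper := H1 m (trans _ _ _ h1 m0m).
rewrite ltr_distl; apply/andP; split; lra.
Qed.

End SoftSystem.

Theorem mainTheorem1 (R : realType) (N : Type) (le : N -> N -> Prop)
  (E : N -> completeNormedModType R) (j : forall n m : N, {linear E m -> E n})
  (x : forall n, E n) :
  soft_inductive_system le j -> unif_bounded x ->
  (j_convergent le j x <-> lim_gg_zero le (fun n m => `|x n - j n m (x m)|)) /\
  (lim_gg_zero le (fun n m => `|x n - j n m (x m)|) <->
     (fun m => net_seminorm le (fun n => x n - basic_net j (x m) n))
       @ dir_filter le --> (0 : \bar R)%E) /\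
  (j_convergent le j x ->
     exists l : R, ((fun n => `|x n|) @ dir_filter le --> l) /\
                   net_seminorm le x = l%:E).
Proof.
move=> hsoft hbnd; split; last split.
- split; [exact: j_convergent_lim_gg | exact: lim_gg_j_convergent].
-
  by [].
- exact: j_convergent_norm_cvg.
Qed.
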